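(* Let $P_A$ and $P_B$ be convex $M$-polyforms and let $T$ be a DC-tiling of $P_B$ by $P_A$ with tiles $P_1,\dots,P_k$. Put $\Gamma_B=\mathbb{Z}^2\cap P_B$, $\Gamma_i=\mathbb{Z}^2\cap P_i$ and $\partial^T\Gamma_B=\Gamma_B\setminus\bigcup_i\Gamma_i$. Then removing the vertices of $\partial^T\Gamma_B$ splits $\Gamma_B$ into the mutually disconnected parts $\Gamma_1,\dots,\Gamma_k$: for $i\neq j$, no vertex of $\Gamma_i$ is adjacent (in $\mathbb{Z}^2$) to a vertex of $\Gamma_j$.
   Context: Let $M$ be the tiling of $\mathbb{R}^2$ in which each closed unit square $[a,a+1]\times[b,b+1]$, $a,b\in\mathbb{Z}$, is cut by its two diagonals into four isosceles triangles (base $1$, height $\tfrac12$, apex at the square's center). An $M$-polyform is a finite connected set of triangles of $M$, identified with the open interior of their union; it is convex if this open set is convex. Automorphisms of $M$ are the maps $x\mapsto Ax+t$ with $A$ a $2\times2$ signed permutation matrix and $t\in\mathbb{Z}^2$. $P^{DC}$ denotes $P$ with a direction and a color assigned to each of its sides, distinct sides receiving distinct colors. A DC-tiling of $P_B$ by $P_A$ is a tiling of $P_B$ by finitely many images of $P_A^{DC}$ under automorphisms of $M$ (open tiles, pairwise disjoint, closures covering the closure of $P_B$, carrying the transported directions and colors) such that every common edge of two adjacent tiles has the same color and direction in both tiles. *)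

From Stdlib Require Import Reals ZArith List Relations.
Open Scope R_scope.

Definition pt := (R * R)%type.
Definition pset := pt -> Prop.

Definition padd (x y : pt) : pt := (fst x + fst y, snd x + snd y).
Definition psub (x y : pt) : pt := (fst x - fst y, snd x - snd y).
Definition pscale (l : R) (x : pt) : pt := (l * fst x, l * snd x).
Definition dot (x y : pt) : R := fst x * fst y + snd x * snd y.

Definition seg (p q : pt) : pset :=
  fun x => exists l, 0 <= l <= 1 /\ x = padd (pscale l p) (pscale (1 - l) q).

Definition subset (A B : pset) : Prop := forall x, A x -> B x.

(* topology of R^2 (box neighbourhoods; same topology as Euclidean) *)
Definition near (x y : pt) (e : R) : Prop :=
  Rabs (fst y - fst x) < e /\ Rabs (snd y - snd x) < e.
Definition interior (S : pset) : pset :=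
  fun x => exists e, 0 < e /\ forall y, near x y e -> S y.
Definition closure (S : pset) : pset :=
  fun x => forall e, 0 < e -> exists y, S y /\ near x y e.
Definition boundary (S : pset) : pset := fun x => closure S x /\ ~ S x.

Definition convex (S : pset) : Prop :=
  forall x y l, S x -> S y -> 0 <= l <= 1 ->
    S (padd (pscale l x) (pscale (1 - l) y)).

(* triangle of the unit square [a,a+1]x[b,b+1] adjacent to its
   bottom (S), right (E), top (N) or left (W) side *)
Inductive quarter := QS | QE | QN | QW.
Definition tri := (Z * Z * quarter)%type.

(* vertices in doubled integer coordinates (so the centre is integral) *)
Definition tri_vertsZ (t : tri) : list (Z * Z) :=
  let '(a, b, d) := t in
  let a2 := (2 * a)%Z in let b2 := (2 * b)%Z in
  let c := (a2 + 1, b2 + 1)%Z in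
  match d with
  | QS => (a2, b2) :: (a2 + 2, b2)%Z :: c :: nil
  | QE => (a2 + 2, b2)%Z :: (a2 + 2, b2 + 2)%Z :: c :: nil
  | QN => (a2 + 2, b2 + 2)%Z :: (a2, b2 + 2)%Z :: c :: nil
  | QW => (a2, b2 + 2)%Z :: (a2, b2) :: c :: nil
  end.

Definition ptZ2 (v : Z * Z) : pt := (IZR (fst v) / 2, IZR (snd v) / 2).

Definition closed_tri (t : tri) : pset :=
  fun x => match tri_vertsZ t with
           | v1 :: v2 :: v3 :: nil =>
               exists l1 l2 l3, 0 <= l1 /\ 0 <= l2 /\ 0 <= l3 /\ l1 + l2 + l3 = 1 /\
                 x = padd (pscale l1 (ptZ2 v1))
                       (padd (pscale l2 (ptZ2 v2)) (pscale l3 (ptZ2 v3)))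
           | _ => False
           end.

Definition tri_adj (s t : tri) : Prop :=
  s <> t /\ exists v w, v <> w /\ In v (tri_vertsZ s) /\ In w (tri_vertsZ s)
                                /\ In v (tri_vertsZ t) /\ In w (tri_vertsZ t).

Definition is_polyform (L : list tri) : Prop :=
  L <> nil /\
  forall s t, In s L -> In t L ->
    clos_refl_trans tri (fun u v => In u L /\ In v L /\ tri_adj u v) s t.

Definition pf_set (L : list tri) : pset :=
  interior (fun x => exists t, In t L /\ closed_tri t x).

Definition convex_polyform (L : list tri) : Prop :=
  is_polyform L /\ convex (pf_set L).

(* ---------- automorphisms of M: x |-> A x + t, A signed permutation ---------- *)
Record aut := Aut { a_swap : bool; a_neg1 : bool; a_neg2 : bool; a_t1 : Z; a_t2 : Z }.
Definition sgn (b : bool) : R := if b then -1 else 1.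
Definition aut_map (g : aut) (x : pt) : pt :=
  let u := if a_swap g then snd x else fst x in
  let v := if a_swap g then fst x else snd x in
  (sgn (a_neg1 g) * u + IZR (a_t1 g), sgn (a_neg2 g) * v + IZR (a_t2 g)).

Definition image (f : pt -> pt) (S : pset) : pset :=
  fun y => exists x, S x /\ y = f x.

Definition side (S : pset) (p q : pt) : Prop :=
  p <> q /\ subset (seg p q) (boundary S) /\
  forall p' q', subset (seg p q) (seg p' q') -> subset (seg p' q') (boundary S) ->
    subset (seg p' q') (seg p q).

(* DC-structure on S: D p q means "(p,q) is a side, directed from p to q";
   col p q is its colour; distinct sides get distinct colours *)
Definition dc_struct (C : Type) (S : pset) (D : pt -> pt -> Prop)
    (col : pt -> pt -> C) : Prop :=
  (forall p q, D p q -> side S p q) /\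
  (forall p q, side S p q -> D p q \/ D q p) /\
  (forall p q, D p q -> ~ D q p) /\
  (forall p q p' q', D p q -> D p' q' -> col p q = col p' q' -> p = p' /\ q = q').

Definition tile (SA : pset) (g : nat -> aut) (i : nat) : pset :=
  image (aut_map (g i)) SA.

Definition dc_tiling (C : Type) (SA SB : pset) (D : pt -> pt -> Prop)
    (col : pt -> pt -> C) (k : nat) (g : nat -> aut) : Prop :=
  (forall i j, (i < k)%nat -> (j < k)%nat -> i <> j ->
     forall x, ~ (tile SA g i x /\ tile SA g j x)) /\
  (forall x, closure SB x <-> exists i, (i < k)%nat /\ closure (tile SA g i) x) /\
  (* common edges carry the same (transported) colour and direction *)
  (forall i j, (i < k)%nat -> (j < k)%nat -> i <> j ->
     forall p q p' q', D p q -> D p' q' ->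
     forall x y, x <> y ->
       subset (seg x y) (seg (aut_map (g i) p) (aut_map (g i) q)) ->
       subset (seg x y) (seg (aut_map (g j) p') (aut_map (g j) q')) ->
       col p q = col p' q' /\
       0 < dot (psub (aut_map (g i) q) (aut_map (g i) p))
               (psub (aut_map (g j) q') (aut_map (g j) p'))).

Definition lat (a b : Z) : pt := (IZR a, IZR b).

(* A lattice point lies in the open polyform given by L exactly when the eight
   triangles of M having it as a vertex all belong to L.  Each of them is
   detected by a probe point, the lattice point plus one of (±1/2, ±1/8),
   (±1/8, ±1/2), which lies inside that triangle together with a box of radius
   1/16; so a lattice point is interior as soon as its eight probes lie in the
   closure, and an interior lattice point has its probes in the interior.  The
   automorphisms of M permute the probe offsets, so tiles inherit the second
   property.  Hence a lattice point of a tile has its probes in the tile, thus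
   in the closure of P_B, and so lies in P_B.  Two Z^2-adjacent lattice points
   share a probe ((a + 1/2, b + 1/8) serves both (a, b) and (a + 1, b)), which
   would then lie in two disjoint open tiles. *)

From Stdlib Require Import Reals ZArith List Lra Lia.
Open Scope R_scope.

Definition in_tri (t : tri) (z : pt) : Prop :=
  let '(a, b, q) := t in
  let u := fst z - IZR a in let v := snd z - IZR b in
  match q with
  | QS => 0 <= v /\ v <= u /\ u + v <= 1
  | QE => u <= 1 /\ v <= u /\ 1 <= u + v
  | QN => v <= 1 /\ u <= v /\ 1 <= u + v
  | QW => 0 <= u /\ u <= v /\ u + v <= 1
  end.

Definition in_open_tri (t : tri) (z : pt) : Prop :=
  let '(a, b, q) := t in
  let u := fst z - IZR a in let v := snd z - IZR b in
  match q with
  | QS => 0 < v /\ v < u /\ u + v < 1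
  | QE => u < 1 /\ v < u /\ 1 < u + v
  | QN => v < 1 /\ u < v /\ 1 < u + v
  | QW => 0 < u /\ u < v /\ u + v < 1
  end.

Lemma closed_tri_iff (t : tri) (z : pt) : closed_tri t z <-> in_tri t z.
Proof.
  destruct t as [[a b] q], z as [x y].
  destruct q; unfold closed_tri, in_tri, padd, pscale, ptZ2;
    cbv beta iota zeta delta [tri_vertsZ]; cbn [fst snd]; rewrite ?plus_IZR, ?mult_IZR;
    (split;
     [ intros (l1 & l2 & l3 & ? & ? & ? & ? & Hz); injection Hz as -> ->;
       replace l1 with (1 - l2 - l3) by lra; lra
     | set (u := x - IZR a); set (v := y - IZR b); intros H ]).
  - exists (1 - u - v), (u - v), (2 * v).
    repeat split; try lra; f_equal; unfold u, v; lra.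
  - exists (u - v), (u + v - 1), (2 * (1 - u)).
    repeat split; try lra; f_equal; unfold u, v; lra.
  - exists (u + v - 1), (v - u), (2 * (1 - v)).
    repeat split; try lra; f_equal; unfold u, v; lra.
  - exists (v - u), (1 - u - v), (2 * u).
    repeat split; try lra; f_equal; unfold u, v; lra.
Qed.

Lemma in_open_tri_in_tri (t : tri) (z : pt) : in_open_tri t z -> in_tri t z.
Proof. destruct t as [[a b] []]; cbn; lra. Qed.

Lemma unit_interval_open_overlap_eq (a i : Z) (x : R) :
  IZR a <= x <= IZR a + 1 -> IZR i < x < IZR i + 1 -> a = i.
Proof.
  intros Ha Hi.
  assert (a < i + 1)%Z by (apply lt_IZR; rewrite plus_IZR; lra).
  assert (i < a + 1)%Z by (apply lt_IZR; rewrite plus_IZR; lra).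
  lia.
Qed.

Lemma in_tri_in_open_tri_eq (t t' : tri) (z : pt) :
  in_tri t z -> in_open_tri t' z -> t = t'.
Proof.
  destruct t as [[a b] q], t' as [[a' b'] q'].
  intros H H'.
  assert (a = a').
  { apply (unit_interval_open_overlap_eq _ _ (fst z)); destruct q, q'; cbn in *; lra. }
  assert (b = b').
  { apply (unit_interval_open_overlap_eq _ _ (snd z)); destruct q, q'; cbn in *; lra. }
  subst; destruct q, q'; cbn in *; solve [reflexivity | lra].
Qed.

Definition tri_union (L : list tri) : pset := fun x => exists t, In t L /\ closed_tri t x.

Lemma tri_union_in_open_tri (L : list tri) (t : tri) (y : pt) :
  tri_union L y -> in_open_tri t y -> In t L.
Proof.
  intros [t' [Ht' Hy]] Hopen.
  apply closed_tri_iff in Hy.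
  now rewrite <- (in_tri_in_open_tri_eq _ _ _ Hy Hopen).
Qed.

Inductive probe_dir := ENE | ESE | WNW | WSW | NNE | NNW | SSE | SSW.

Definition probe_offset (d : probe_dir) : pt :=
  match d with
  | ENE => (1/2, 1/8)   | ESE => (1/2, -1/8)
  | WNW => (-1/2, 1/8)  | WSW => (-1/2, -1/8)
  | NNE => (1/8, 1/2)   | NNW => (-1/8, 1/2)
  | SSE => (1/8, -1/2)  | SSW => (-1/8, -1/2)
  end.

Definition probe (a b : Z) (d : probe_dir) : pt := padd (lat a b) (probe_offset d).

Definition probe_tri (a b : Z) (d : probe_dir) : tri :=
  match d with
  | ENE => (a, b, QS)            | ESE => (a, (b - 1)%Z, QN)
  | WNW => ((a - 1)%Z, b, QS)    | WSW => ((a - 1)%Z, (b - 1)%Z, QN)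
  | NNE => (a, b, QW)            | NNW => ((a - 1)%Z, b, QE)
  | SSE => (a, (b - 1)%Z, QW)    | SSW => ((a - 1)%Z, (b - 1)%Z, QE)
  end.

Ltac exists_probe_dir tac :=
  first [ exists ENE; tac | exists ESE; tac | exists WNW; tac | exists WSW; tac
        | exists NNE; tac | exists NNW; tac | exists SSE; tac | exists SSW; tac ].

Lemma probe_ray_in_open_tri (a b : Z) (d : probe_dir) (s : R) : 0 < s <= 1 ->
  in_open_tri (probe_tri a b d) (padd (lat a b) (pscale s (probe_offset d))).
Proof. intros; destruct d; cbn; rewrite ?minus_IZR; lra. Qed.

Lemma near_probe_in_open_tri (a b : Z) (d : probe_dir) (y : pt) :
  near (probe a b d) y (1/16) -> in_open_tri (probe_tri a b d) y.
Proof.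
  intros [Hx Hy]; apply Rabs_def2 in Hx; apply Rabs_def2 in Hy.
  destruct d; cbn in *; rewrite ?minus_IZR; lra.
Qed.

Lemma near_lat_in_probe_tri (a b : Z) (y : pt) :
  near (lat a b) y (1/2) -> exists d, in_tri (probe_tri a b d) y.
Proof.
  intros [Hx Hy]; apply Rabs_def2 in Hx; apply Rabs_def2 in Hy; cbn in *.
  destruct (Rle_dec (IZR a) (fst y)), (Rle_dec (IZR b) (snd y)),
    (Rle_dec (fst y - IZR a) (snd y - IZR b)), (Rle_dec (IZR b - snd y) (fst y - IZR a));
    exists_probe_dir ltac:(cbn; rewrite ?minus_IZR; lra).
Qed.

Lemma near_refl (x : pt) (e : R) : 0 < e -> near x x e.
Proof. intros; split; apply Rabs_def1; lra. Qed.

Lemma pf_set_tri_union (L : list tri) (x : pt) : pf_set L x -> tri_union L x.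
Proof. intros [e [He HL]]; exact (HL x (near_refl x e He)). Qed.

Lemma closure_incl (S : pset) (x : pt) : S x -> closure S x.
Proof. intros Hx e He; exists x; split; [exact Hx | exact (near_refl x e He)]. Qed.

Lemma pf_set_lat_probe_tri (L : list tri) (a b : Z) (d : probe_dir) :
  pf_set L (lat a b) -> In (probe_tri a b d) L.
Proof.
  intros [e [He HL]].
  set (s := Rmin e 1).
  assert (0 < s) by (apply Rmin_pos; lra).
  assert (s <= e) by apply Rmin_l.
  assert (s <= 1) by apply Rmin_r.
  apply (tri_union_in_open_tri L _ (padd (lat a b) (pscale s (probe_offset d)))).
  - apply HL; split; apply Rabs_def1; destruct d; cbn; lra.
  - apply probe_ray_in_open_tri; lra.
Qed.

Lemma probe_tri_pf_set_probe (L : list tri) (a b : Z) (d : probe_dir) :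
  In (probe_tri a b d) L -> pf_set L (probe a b d).
Proof.
  intros Hin; exists (1/16); split; [lra |].
  intros y Hy; exists (probe_tri a b d); split; [exact Hin |].
  apply closed_tri_iff, in_open_tri_in_tri, near_probe_in_open_tri, Hy.
Qed.

Lemma closure_probe_probe_tri (L : list tri) (a b : Z) (d : probe_dir) :
  closure (pf_set L) (probe a b d) -> In (probe_tri a b d) L.
Proof.
  intros Hcl; destruct (Hcl (1/16)) as [y [Hy Hnear]]; [lra |].
  apply (tri_union_in_open_tri L _ y).
  - exact (pf_set_tri_union _ _ Hy).
  - exact (near_probe_in_open_tri _ _ _ _ Hnear).
Qed.

Lemma probe_tris_pf_set_lat (L : list tri) (a b : Z) :
  (forall d, In (probe_tri a b d) L) -> pf_set L (lat a b).
Proof.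
  intros HL; exists (1/2); split; [lra |].
  intros y Hy; destruct (near_lat_in_probe_tri a b y Hy) as [d Hd].
  exists (probe_tri a b d); split; [apply HL | apply closed_tri_iff, Hd].
Qed.

Definition aut_lin (g : aut) (w : pt) : pt :=
  (sgn (a_neg1 g) * (if a_swap g then snd w else fst w),
   sgn (a_neg2 g) * (if a_swap g then fst w else snd w)).

Lemma aut_map_padd (g : aut) (x w : pt) :
  aut_map g (padd x w) = padd (aut_map g x) (aut_lin g w).
Proof. destruct g as [[] [] [] t1 t2]; unfold aut_map, aut_lin, padd, sgn; cbn; f_equal; ring. Qed.

Lemma sgn_affine_IZR (s : bool) (t a : Z) (u : R) :
  sgn s * u + IZR t = IZR a -> exists n, u = IZR n.
Proof.
  destruct s; unfold sgn; intros H; [exists (t - a)%Z | exists (a - t)%Z];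
    rewrite minus_IZR; lra.
Qed.

Lemma aut_map_eq_lat (g : aut) (x : pt) (a b : Z) :
  aut_map g x = lat a b -> exists i j, x = lat i j.
Proof.
  destruct g as [sw n1 n2 t1 t2], x as [x1 x2]; unfold aut_map, lat; cbn.
  intros H; injection H as H1 H2.
  destruct (sgn_affine_IZR _ _ _ _ H1) as [m Hm], (sgn_affine_IZR _ _ _ _ H2) as [n Hn].
  destruct sw; subst; [exists n, m | exists m, n]; reflexivity.
Qed.

Lemma aut_lin_probe_offset (g : aut) (d : probe_dir) :
  exists d', aut_lin g (probe_offset d') = probe_offset d.
Proof.
  destruct g as [[] [] [] t1 t2], d; unfold aut_lin, sgn; cbn;
    exists_probe_dir ltac:(cbn; f_equal; lra).
Qed.

Definition probe_closed (S : pset) : Prop :=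
  forall a b d, S (lat a b) -> S (probe a b d).

Lemma probe_closed_pf_set (L : list tri) : probe_closed (pf_set L).
Proof. intros a b d H; apply probe_tri_pf_set_probe, pf_set_lat_probe_tri, H. Qed.

Lemma probe_closed_image (g : aut) (S : pset) :
  probe_closed S -> probe_closed (image (aut_map g) S).
Proof.
  intros HS a b d [x [Hx Hgx]].
  destruct (aut_map_eq_lat g x a b (eq_sym Hgx)) as [i [j ->]].
  destruct (aut_lin_probe_offset g d) as [d' Hd'].
  exists (probe i j d'); split; [exact (HS _ _ _ Hx) |].
  unfold probe; rewrite aut_map_padd, Hd', Hgx; reflexivity.
Qed.

Lemma lat_adjacent_common_probe (a b c d : Z) :
  (Z.abs (a - c) + Z.abs (b - d) = 1)%Z -> exists d1 d2, probe a b d1 = probe c d d2.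
Proof.
  intros Hadj.
  assert (((c = a + 1 /\ d = b) \/ (c = a - 1 /\ d = b) \/
           (c = a /\ d = b + 1) \/ (c = a /\ d = b - 1))%Z)
    as [[-> ->] | [[-> ->] | [[-> ->] | [-> ->]]]] by lia;
    [exists ENE, WNW | exists WNW, ENE | exists NNE, SSE | exists SSE, NNE];
    unfold probe, padd, lat; cbn; rewrite ?plus_IZR, ?minus_IZR; f_equal; lra.
Qed.

Theorem corollary3 (LA LB : list tri) (C : Type) (D : pt -> pt -> Prop)
    (col : pt -> pt -> C) (k : nat) (g : nat -> aut) :
  convex_polyform LA -> convex_polyform LB ->
  dc_struct C (pf_set LA) D col ->
  dc_tiling C (pf_set LA) (pf_set LB) D col k g ->
  (* Gamma_i is contained in Gamma_B *)
  (forall i, (i < k)%nat -> forall a b : Z,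
      tile (pf_set LA) g i (lat a b) -> pf_set LB (lat a b)) /\
  (* no vertex of Gamma_i is Z^2-adjacent to a vertex of Gamma_j, i <> j *)
  (forall i j, (i < k)%nat -> (j < k)%nat -> i <> j ->
     forall a b c d : Z,
       tile (pf_set LA) g i (lat a b) -> tile (pf_set LA) g j (lat c d) ->
       (Z.abs (a - c) + Z.abs (b - d) <> 1)%Z).
Proof.
  intros _ _ _ [Hdisj [Hcover _]].
  assert (Htile : forall i, probe_closed (tile (pf_set LA) g i))
    by (intro i; apply probe_closed_image, probe_closed_pf_set).
  split.
  - intros i Hi a b Hab.
    apply probe_tris_pf_set_lat; intros dir.
    apply closure_probe_probe_tri, Hcover.
    exists i; split; [exact Hi |].
    apply closure_incl, Htile, Hab.
  - intros i j Hi Hj Hij a b c d Hab Hcd Hadj.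
    destruct (lat_adjacent_common_probe a b c d Hadj) as [d1 [d2 Hshared]].
    apply (Hdisj i j Hi Hj Hij (probe a b d1)); split.
    + apply Htile, Hab.
    + rewrite Hshared; apply Htile, Hcd.
Qed.
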